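(* Consider a $K$-armed bandit with horizon $n \geq K$ and a unique optimal action $a^*$, and assume $\mu(a) \in [0,1]$ for all $a \in [K]$. Run the algorithm described in the context with confidence parameter $\delta = 1/n^{3}$. Then there is a universal constant $C>0$ such that the expected regret satisfies $$R_n \;\le\; C\left(\sum_{a\in[K]}\Delta(a) + \frac{K\log n}{\Delta_{\min}}\right),$$ that is, $R_n = O\!\left(\frac{K\log n}{\Delta_{\min}}\right)$, where $\Delta_{\min} \coloneqq \min_{a \neq a^*} \Delta(a) > 0$.
   Context: $K$-armed bandit: actions $a\in[K]=\{1,\dots,K\}$ (identified with the standard basis vectors $e_1,\dots,e_K$ of $\mathbb{R}^K$), with unknown mean rewards $\mu(a)$. In each round $t=1,\dots,n$ the learner takes an action $A_t$ and observes $Y_t=\mu(A_t)+\eta_t$, where, conditionally on the past (previous actions and rewards and the current action), $\eta_t$ is $1$-sub-Gaussian with mean zero. Optimal action $a^*=\arg\max_a \mu(a)$; gap $\Delta(a)=\mu(a^* )-\mu(a)$. Regret $R_n=\mathbb{E}\big[\sum_{t=1}^n(\mu(a^* )-\mu(A_t))\big]$. Notation: $T_t(a)=\sum_{s=1}^{t-1}\mathbb{1}\{A_s=a\}$; $\hat\mu_t(a)=T_t(a)^{-1}\sum_{s=1}^{t-1}\mathbb{1}\{A_s=a\}Y_s$; $c_t(a)=\sqrt{2\log(1/\delta)/T_t(a)}$ for $\delta\in(0,1)$; $U_t(a)=\hat\mu_t(a)+c_t(a)$, $L_t(a)=\hat\mu_t(a)-c_t(a)$. Algorithm: in rounds $t=1,\dots,K$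 take each action once. In each round $t\ge K+1$, form the plausible set $\tilde{A}_t=\{a\in[K]: U_t(a)\ge \max_{a'\in[K]}L_t(a')\}$ and take $A_t\in\arg\max_{a\in\tilde A_t} 1/T_t(a)$ (i.e. a least-taken plausible action; ties broken arbitrarily). This equals maximizing $\log\det(V_t+e_ae_a^\top)$ over plausible actions, where $V_t=\sum_{s<t}e_{A_s}e_{A_s}^\top$. *)

From mathcomp Require Import all_boot all_order all_algebra.
From mathcomp Require Import all_classical all_reals all_analysis.
Import Order.TTheory GRing.Theory Num.Theory.

Set Implicit Arguments.
Unset Strict Implicit.
Unset Printing Implicit Defensive.

Local Open Scope ring_scope.
Local Open Scope classical_set_scope.

Section Bandit.
Variables (R : realType) (T : Type) (K : nat).
(* A t w : action taken in round t (rounds are numbered 1, 2, ...);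
   Y t w : reward observed in round t. *)
Variables (A : nat -> T -> 'I_K) (Y : nat -> T -> R).

Definition pulls (t : nat) (a : 'I_K) (w : T) : nat :=
  (\sum_(1 <= s < t) (A s w == a))%N.

Definition muhat (t : nat) (a : 'I_K) (w : T) : R :=
  (pulls t a w)%:R^-1 * \sum_(1 <= s < t | A s w == a) Y s w.

Definition conf (delta : R) (t : nat) (a : 'I_K) (w : T) : R :=
  Num.sqrt (2 * ln (delta^-1) / (pulls t a w)%:R).

Definition ucb delta t a w : R := muhat t a w + conf delta t a w.
Definition lcb delta t a w : R := muhat t a w - conf delta t a w.

Definition plausible (delta : R) (t : nat) (w : T) (a : 'I_K) : Prop :=
  forall a' : 'I_K, lcb delta t a' w <= ucb delta t a w.

Definition alg_round (delta : R) (t : nat) (w : T) : Prop :=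
  plausible delta t w (A t w) /\
  forall a, plausible delta t w a ->
    (pulls t a w)%:R^-1 <= (pulls t (A t w) w)%:R^-1 :> R.
End Bandit.

Definition history_gen (R : realType) (T : Type) (K : nat)
  (A : nat -> T -> 'I_K) (Y : nat -> T -> R) (t : nat) : set (set T) :=
  [set B | exists s (a : 'I_K), (1 <= s <= t)%N /\ B = A s @^-1` [set a]] `|`
  [set B | exists s (S : set R), [/\ (1 <= s < t)%N, measurable S &
                                     B = Y s @^-1` S]].

Definition history (R : realType) (T : Type) (K : nat)
  (A : nat -> T -> 'I_K) (Y : nat -> T -> R) (t : nat) : set (set T) :=
  <<s history_gen A Y t >>.

(* When every confidence interval [L_t(b), U_t(b)] of rounds K < t <= n
   contains mu(b), the optimal arm is always plausible; a suboptimal arm a is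
   then only played when it is a least pulled plausible arm, and comparing
   U_t(a) >= L_t(astar) gives Delta(a) <= 4 c_t(a), i.e.
   T_t(a) <= 32 log(1/delta) / Delta(a)^2.  This bounds the regret by
   sum_a Delta(a) + 32 K log(1/delta) / Delta_min.
   If instead the interval of arm b fails in round t while b has been pulled
   m times, then for the tilt lam = +-sqrt(2 log(1/delta) / m) the
   exponential supermartingale exp(sum_{s < t, A_s = b} (lam eta_s - lam^2/2))
   is at least 1/delta.  By conditional sub-Gaussianity its expectation is at
   most 1 (the one-step bound, given on history events, extends to
   nonnegative history-measurable weights by simple-function approximation).
   Summing over arms, rounds, pull counts and signs, the regret on the bad
   event (at most n) contributes n * 2K(n+1)^2 delta = O(K) for
   delta = n^-3. *)

From mathcomp Require Import all_boot all_order all_algebra.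
From mathcomp Require Import all_classical all_reals all_analysis.
From mathcomp Require Import measurable_realfun.
From mathcomp Require Import ring lra zify.
Import numFieldNormedType.Exports.
Import Order.TTheory GRing.Theory Num.Theory.
Local Open Scope ring_scope.
Local Open Scope classical_set_scope.
Set Implicit Arguments.
Unset Strict Implicit.
Unset Printing Implicit Defensive.

Lemma measurable_fun_ord_comp (R : realType) d (T : measurableType d) (K : nat)
    (X : T -> 'I_K) (g : 'I_K -> R) :
  (forall a, measurable (X @^-1` [set a])) ->
  measurable_fun setT (fun w => g (X w)).
Proof.
move=> mX.
have -> : (fun w => g (X w)) =
    (fun w => \sum_(a < K) g a * \1_(X @^-1` [set a]) w).
  apply/funext => w; rewrite (bigD1 (X w)) //= indicE mem_set// mulr1.
  rewrite big1 ?addr0 // => b bX; rewrite indicE memNset ?mulr0 //=.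
  by move=> Xb; move: bX; rewrite Xb eqxx.
apply: measurable_sum => a; apply: measurable_funM; first exact: measurable_cst.
exact: measurable_indic.
Qed.

Lemma measurable_fun_sum_in (R : realType) d (T : measurableType d)
    (r : seq nat) (F : nat -> T -> R) :
  (forall s, s \in r -> measurable_fun setT (F s)) ->
  measurable_fun setT (fun w => \sum_(s <- r) F s w).
Proof.
elim: r => [|x r IH] mF.
  by under eq_fun do rewrite big_nil; exact: measurable_cst.
under eq_fun do rewrite big_cons.
apply: measurable_funD; first by apply: mF; rewrite inE eqxx.
by apply: IH => s sr; apply: mF; rewrite inE sr orbT.
Qed.

Section History.
Context (R : realType) (d : measure_display) (T : measurableType d) (K : nat)
  (mu : 'I_K -> R) (A : nat -> T -> 'I_K) (Y eta : nat -> T -> R).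
Hypothesis measurable_A : forall t (a : 'I_K), measurable (A t @^-1` [set a]).
Hypothesis measurable_eta : forall t, measurable_fun setT (eta t).
Hypothesis Y_def : forall t w, Y t w = mu (A t w) + eta t w.

Definition history_space t := g_sigma_algebraType (history_gen A Y t).

Lemma measurable_Y s : measurable_fun setT (Y s).
Proof.
rewrite (_ : Y s = fun w => mu (A s w) + eta s w); last first.
  by apply/funext => w; rewrite Y_def.
apply: measurable_funD; last exact: measurable_eta.
exact: measurable_fun_ord_comp.
Qed.

Lemma history_sub_measurable t : history A Y t `<=` measurable.
Proof.
apply: smallest_sub; first exact: sigma_algebra_measurable.
move=> B [[s [a [_ ->]]]|[s [S [_ mS ->]]]]; first exact: measurable_A.
by rewrite -[_ @^-1` _]setTI; exact: measurable_Y.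
Qed.

Lemma history_measurable_A t s (g : 'I_K -> R) : (1 <= s <= t)%N ->
  measurable_fun setT (fun w : history_space t => g (A s w)).
Proof.
move=> hs; apply: measurable_fun_ord_comp => a; apply: sub_sigma_algebra.
by left; exists s, a.
Qed.

Lemma history_measurable_Y t s : (1 <= s < t)%N ->
  measurable_fun setT (Y s : history_space t -> R).
Proof.
move=> hs _ B mB; rewrite setTI; apply: sub_sigma_algebra.
by right; exists s, B.
Qed.

Lemma history_measurable_eta t s : (1 <= s < t)%N ->
  measurable_fun setT (eta s : history_space t -> R).
Proof.
move=> /andP[s1 st].
rewrite (_ : eta s = fun w => Y s w - mu (A s w)); last first.
  by apply/funext => w; rewrite Y_def addrC addKr.
apply: measurable_funB; first by apply: history_measurable_Y; rewrite s1.
by apply: history_measurable_A; rewrite s1 ltnW.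
Qed.

Lemma measurable_fun_history t (f : T -> R) :
  measurable_fun setT (f : history_space t -> R) -> measurable_fun setT f.
Proof.
move=> mf _ B mB; apply: history_sub_measurable.
exact: (mf measurableT B mB).
Qed.

End History.

Section SigmaBound.
Context (R : realType) (d : measure_display) (T : measurableType d)
  (P : measure T R) (G : set (set T)).
Hypothesis sigmaG_measurable : <<s G>> `<=` measurable.
Variables (g : T -> R) (c : R).
Hypothesis g_ge0 : forall w, 0 <= g w.
Hypothesis measurable_g : measurable_fun setT g.
Hypothesis c_ge0 : 0 <= c.
Hypothesis g_bound : forall B, <<s G>> B ->
  (\int[P]_(w in B) (g w)%:E <= c%:E * P B)%E.

Definition weight_bounded (h : T -> R) :=
  [/\ forall w, 0 <= h w, measurable_fun setT h &
      (\int[P]_w (h w * g w)%:E <= c%:E * \int[P]_w (h w)%:E)%E].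

Lemma weight_bounded_indic B : <<s G>> B -> weight_bounded (\1_B).
Proof.
move=> GB; have mB := sigmaG_measurable GB; split.
- by move=> w; rewrite indicE; case: (_ \in _).
- exact: measurable_indic.
rewrite integral_indic // setIT.
rewrite (_ : \int[P]_w _ = \int[P]_(w in B) (g w)%:E)%E; first exact: g_bound.
rewrite [RHS]integral_mkcond; apply: eq_integral => w _; rewrite /patch indicE.
by case: ifP => _; rewrite ?mul1r ?mul0r.
Qed.

Lemma weight_bounded0 : weight_bounded (fun _ => 0).
Proof.
split => //; under eq_integral do rewrite mul0r.
by rewrite !integral0 mule0.
Qed.

Lemma weight_boundedD h1 h2 : weight_bounded h1 -> weight_bounded h2 ->
  weight_bounded (fun w => h1 w + h2 w).
Proof.
move=> [h1_ge0 mh1 i1] [h2_ge0 mh2 i2]; split.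
- by move=> w; rewrite addr_ge0.
- exact: measurable_funD.
have mhg1 : measurable_fun setT (fun w => (h1 w * g w)%:E).
  by apply/measurable_EFinP; exact: measurable_funM.
have mhg2 : measurable_fun setT (fun w => (h2 w * g w)%:E).
  by apply/measurable_EFinP; exact: measurable_funM.
under eq_integral do rewrite mulrDl EFinD.
rewrite ge0_integralD //; try by move=> w _; rewrite lee_fin mulr_ge0.
under [X in (_ <= _ * X)%E]eq_integral do rewrite EFinD.
rewrite [X in (_ <= _ * X)%E]ge0_integralD //;
  try by [move=> w _; rewrite lee_fin | exact/measurable_EFinP].
rewrite ge0_muleDr; try by apply: integral_ge0 => w _; rewrite lee_fin.
exact: leeD.
Qed.

Lemma weight_boundedZ h r : 0 <= r -> weight_bounded h ->
  weight_bounded (fun w => r * h w).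
Proof.
move=> r_ge0 [h_ge0 mh ih]; split.
- by move=> w; rewrite mulr_ge0.
- by apply: measurable_funM => //; exact: measurable_cst.
under eq_integral do rewrite -mulrA EFinM.
rewrite ge0_integralZl //; first last.
- by move=> w _; rewrite lee_fin mulr_ge0.
- by apply/measurable_EFinP; exact: measurable_funM.
under [X in (_ <= _ * X)%E]eq_integral do rewrite EFinM.
rewrite [X in (_ <= _ * X)%E]ge0_integralZl //; first last.
- by move=> w _; rewrite lee_fin.
- exact/measurable_EFinP.
by rewrite muleCA; apply: lee_wpmul2l.
Qed.

Lemma weight_bounded_sum N (F : nat -> T -> R) :
  (forall j, weight_bounded (F j)) ->
  weight_bounded (fun w => \sum_(j < N) F j w).
Proof.
move=> HF; elim: N => [|N IH].
  by under eq_fun do rewrite big_ord0; exact: weight_bounded0.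
by under eq_fun do rewrite big_ord_recr /=; exact: weight_boundedD.
Qed.

Variable f : T -> R.
Hypothesis f_ge0 : forall w, 0 <= f w.
Hypothesis measurable_f : measurable_fun setT (f : g_sigma_algebraType G -> R).

Let approx_f k : T -> R :=
  approx (setT : set (g_sigma_algebraType G)) (EFin \o f) k.

Let measurable_EFin_f :
  measurable_fun setT (EFin \o f : g_sigma_algebraType G -> \bar R).
Proof. exact/measurable_EFinP. Qed.

Let weight_bounded_approx k : weight_bounded (approx_f k).
Proof.
apply: weight_boundedD; last first.
  apply: weight_boundedZ => //; apply: weight_bounded_indic.
  exact: (@emeasurable_fun_c_infty _ (g_sigma_algebraType G)).
apply: (@weight_bounded_sum _
  (fun j w => j%:R * 2 ^- k * \1_(dyadic_approx setT (EFin \o f) k j) w)).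
move=> j; apply: weight_boundedZ => //; apply: weight_bounded_indic.
rewrite /dyadic_approx; case: ifPn => _; last first.
  exact: (@measurable0 _ (g_sigma_algebraType G)).
rewrite -preimage_comp; apply: measurable_EFin_f => //.
by apply/measurable_image_EFin; exact: measurable_itv.
Qed.

Let cvg_integral_approx_mul :
  (\int[P]_w (approx_f k w * g w)%:E @[k --> \oo] -->
   \int[P]_w (f w * g w)%:E)%E.
Proof.
have cvg_f w : approx_f k w @[k --> \oo] --> f w.
  by have := @cvg_approx _ (g_sigma_algebraType G) R setT (EFin \o f) w
    (fun x _ => f_ge0 x) I (ltry _).
have limE w : limn (fun k => (approx_f k w * g w)%:E) = (f w * g w)%:E.
  have cvg_fg : (fun k => approx_f k w * g w) @ \oo --> f w * g w.
    exact: cvgMr_tmp.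
  rewrite -(cvg_lim _ cvg_fg) // EFin_lim //.
  by apply/cvg_ex; exists (f w * g w).
have approx_nd k m w : (k <= m)%N -> approx_f k w * g w <= approx_f m w * g w.
  move=> km; apply: ler_wpM2r => //.
  have := @nd_approx _ (g_sigma_algebraType G) R setT (EFin \o f) k m km.
  by move=> /lefP; apply.
under [X in (_ --> X)%E]eq_integral do rewrite -limE.
apply: cvg_monotone_convergence => //.
- move=> k; apply/measurable_EFinP; apply: measurable_funM => //.
  by case: (weight_bounded_approx k).
- by move=> k w _; rewrite lee_fin mulr_ge0 //; case: (weight_bounded_approx k).
- by move=> w _ k m km; rewrite lee_fin; exact: approx_nd.
Qed.

Lemma integral_mul_le_sigma :
  (\int[P]_w (f w * g w)%:E <= c%:E * \int[P]_w (f w)%:E)%E.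
Proof.
have measurable_fT : measurable_fun setT f.
  move=> _ B mB; apply: sigmaG_measurable.
  exact: (measurable_f (@measurableT _ (g_sigma_algebraType G)) mB).
rewrite -(cvg_lim _ cvg_integral_approx_mul) //.
apply: lime_le; first by apply/cvg_ex; eexists; exact: cvg_integral_approx_mul.
apply: nearW => k.
have [approx_ge0 measurable_approx approx_le] := weight_bounded_approx k.
apply: (le_trans approx_le); apply: lee_wpmul2l; first by rewrite lee_fin.
apply: ge0_le_integral => //.
- by move=> w _; rewrite lee_fin.
- exact/measurable_EFinP.
- exact/measurable_EFinP.
move=> w _; exact: (@le_approx _ (g_sigma_algebraType G) R setT (EFin \o f) k w
  (fun x _ => f_ge0 x) I).
Qed.

End SigmaBound.

Section ExpSupermartingale.
Context (R : realType) (d : measure_display) (T : measurableType d)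
  (P : probability T R) (K n : nat) (mu : 'I_K -> R)
  (A : nat -> T -> 'I_K) (Y eta : nat -> T -> R).
Hypothesis measurable_A : forall t (a : 'I_K), measurable (A t @^-1` [set a]).
Hypothesis measurable_eta : forall t, measurable_fun setT (eta t).
Hypothesis Y_def : forall t w, Y t w = mu (A t w) + eta t w.
Hypothesis eta_subgaussian : forall t, (1 <= t <= n)%N ->
  forall B, history A Y t B -> forall lam : R,
    (\int[P]_(w in B) (expR (lam * eta t w))%:E
       <= (expR (lam ^+ 2 / 2))%:E * P B)%E.

Definition exp_supermart (a : 'I_K) (l : R) (t : nat) (w : T) : R :=
  expR (\sum_(1 <= s < t) (A s w == a)%:R * (l * eta s w - l ^+ 2 / 2)).

Lemma exp_supermart_ge0 a l t w : 0 <= exp_supermart a l t w.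
Proof. exact: expR_ge0. Qed.

Lemma history_measurable_exp_supermart a l t :
  measurable_fun setT (exp_supermart a l t : history_space A Y t -> R).
Proof.
apply: measurableT_comp; first exact: measurable_expR.
apply: measurable_fun_sum_in => s; rewrite mem_index_iota => /andP[s1 st].
apply: measurable_funM.
  by apply: (history_measurable_A (fun b => (b == a)%:R)); rewrite s1 ltnW.
apply: measurable_funB; last exact: measurable_cst.
apply: measurable_funM; first exact: measurable_cst.
by apply: (history_measurable_eta Y_def); rewrite s1.
Qed.

Lemma measurable_exp_supermart a l t : measurable_fun setT (exp_supermart a l t).
Proof.
apply: (measurable_fun_history measurable_A measurable_eta Y_def).
exact: history_measurable_exp_supermart.
Qed.

Lemma exp_supermart1 a l t : (t <= 1)%N -> exp_supermart a l t = fun _ => 1.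
Proof.
by move=> t1; apply/funext => w; rewrite /exp_supermart big_geq // expR0.
Qed.

Lemma exp_supermartS a l t w : (1 <= t)%N ->
  exp_supermart a l t.+1 w =
    exp_supermart a l t w * (A t w != a)%:R +
    exp_supermart a l t w * (A t w == a)%:R * expR (l * eta t w - l ^+ 2 / 2).
Proof.
move=> t1; rewrite /exp_supermart big_nat_recr //= expRD.
case: eqP => _ /=; first by rewrite mul1r mulr0 add0r mulr1.
by rewrite mul0r expR0 !mulr1 mulr0 mul0r addr0.
Qed.

Lemma integral_tilted_noise_le l t B : (1 <= t <= n)%N -> history A Y t B ->
  (\int[P]_(w in B) (expR (l * eta t w - l ^+ 2 / 2))%:E <= 1%:E * P B)%E.
Proof.
move=> ht HB.
have mB := history_sub_measurable measurable_A measurable_eta Y_def HB.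
under eq_integral do rewrite expRD mulrC EFinM.
have mexp : measurable_fun B (fun w => (expR (l * eta t w))%:E).
  apply/measurable_funTS/measurable_EFinP.
  apply: measurableT_comp; first exact: measurable_expR.
  by apply: measurable_funM; [exact: measurable_cst | exact: measurable_eta].
rewrite (ge0_integralZl P mB mexp); last 2 first.
- by move=> w _; rewrite lee_fin expR_ge0.
- by rewrite lee_fin expR_ge0.
apply: le_trans (lee_wpmul2l _ (eta_subgaussian ht HB l)) _.
  by rewrite lee_fin expR_ge0.
by rewrite muleA -EFinM -expRD addNr expR0 mul1e.
Qed.

Lemma integral_exp_supermartS a l t : (1 <= t <= n)%N ->
  (\int[P]_w (exp_supermart a l t.+1 w)%:E
     <= \int[P]_w (exp_supermart a l t w)%:E)%E.
Proof.
move=> /[dup] ht /andP[t1 _].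
pose M := exp_supermart a l t.
pose f1 w := M w * (A t w != a)%:R.
pose f2 w := M w * (A t w == a)%:R.
pose g w := expR (l * eta t w - l ^+ 2 / 2).
have f1_ge0 w : 0 <= f1 w by rewrite mulr_ge0 ?exp_supermart_ge0.
have f2_ge0 w : 0 <= f2 w by rewrite mulr_ge0 ?exp_supermart_ge0.
have mf1 : measurable_fun setT f1.
  apply: measurable_funM; first exact: measurable_exp_supermart.
  exact: (measurable_fun_ord_comp (fun b => (b != a)%:R) (measurable_A t)).
have mf2H : measurable_fun setT (f2 : history_space A Y t -> R).
  apply: measurable_funM; first exact: history_measurable_exp_supermart.
  by apply: (history_measurable_A (fun b => (b == a)%:R)); rewrite t1 leqnn.
have mf2 := measurable_fun_history measurable_A measurable_eta Y_def mf2H.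
have mg : measurable_fun setT g.
  apply: measurableT_comp; first exact: measurable_expR.
  apply: measurable_funB; last exact: measurable_cst.
  by apply: measurable_funM; [exact: measurable_cst | exact: measurable_eta].
have f2g_le : (\int[P]_w (f2 w * g w)%:E <= \int[P]_w (f2 w)%:E)%E.
  rewrite -[X in (_ <= X)%E]mul1e.
  apply: (integral_mul_le_sigma
    (history_sub_measurable measurable_A measurable_eta Y_def (t := t))) => //.
  - by move=> w; exact: expR_ge0.
  - by move=> B; exact: integral_tilted_noise_le.
under eq_integral do rewrite exp_supermartS // EFinD.
have M_split w : exp_supermart a l t w = f1 w + f2 w.
  by rewrite /f1 /f2; case: eqP; rewrite ?mulr0 ?mulr1 ?addr0 ?add0r.
under [X in (_ <= X)%E]eq_integral do rewrite M_split EFinD.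
rewrite !ge0_integralD //; try by [exact/measurable_EFinP |
  exact/measurable_EFinP/measurable_funM |
  move=> w _; rewrite lee_fin ?mulr_ge0 ?expR_ge0].
exact: leeD2l.
Qed.

Lemma integral_exp_supermart_le1 a l t : (t <= n.+1)%N ->
  (\int[P]_w (exp_supermart a l t w)%:E <= 1)%E.
Proof.
have int1 : (\int[P]_w ((fun _ : T => 1 : R) w)%:E = 1)%E.
  by rewrite integral_cst // mul1e; exact: probability_setT.
elim: t => [|t IH] tn; first by rewrite exp_supermart1 // int1.
have [->|t_gt0] := posnP t; first by rewrite exp_supermart1 // int1.
apply: le_trans (IH (ltnW tn)).
by apply: integral_exp_supermartS; rewrite t_gt0.
Qed.

End ExpSupermartingale.

Section Pulls.
Context (T : Type) (K : nat) (A : nat -> T -> 'I_K).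

Lemma pullsS t b w : (1 <= t)%N ->
  pulls A t.+1 b w = (pulls A t b w + (A t w == b))%N.
Proof. by move=> t1; rewrite /pulls big_nat_recr. Qed.

Lemma sum_pulls t w : (\sum_(b < K) pulls A t b w = t.-1)%N.
Proof.
rewrite /pulls exchange_big /= (eq_bigr (fun _ => 1%N)).
  by rewrite sum_nat_const_nat muln1 subn1.
move=> s _; rewrite (bigD1 (A s w)) //= eqxx big1 // => b /negPf.
by rewrite eq_sym => ->.
Qed.

Lemma pulls_le t b w : (pulls A t b w <= t.-1)%N.
Proof.
rewrite -(sum_pulls t w) (bigD1 b) //=; exact: leq_addr.
Qed.

Lemma sum_pullsE (R : realType) (f : 'I_K -> R) t w :
  \sum_(1 <= s < t) f (A s w) = \sum_(b < K) f b * (pulls A t b w)%:R.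
Proof.
under [RHS]eq_bigr do rewrite /pulls natr_sum big_distrr /=.
rewrite exchange_big /=; apply: eq_bigr => s _.
rewrite (bigD1 (A s w)) //= eqxx mulr1 big1 ?addr0 // => b /negPf.
by rewrite eq_sym => ->; rewrite mulr0.
Qed.

Hypothesis A_init : forall w (a : 'I_K), exists2 t, (1 <= t <= K)%N & A t w = a.

Lemma pulls_init b w : pulls A K.+1 b w = 1%N.
Proof.
have pulls_ge1 a : (1 <= pulls A K.+1 a w)%N.
  have [t0 ht0 At0] := A_init w a.
  rewrite /pulls (bigD1_seq t0) ?mem_index_iota ?iota_uniq //=.
  by rewrite At0 eqxx.
apply/eqP; rewrite eqn_leq pulls_ge1 andbT.
have := sum_pulls K.+1 w; rewrite (bigD1 b) //= => sumE.
have : (\sum_(a < K | a != b) 1 <= \sum_(a < K | a != b) pulls A K.+1 a w)%N.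
  by apply: leq_sum => a _; exact: pulls_ge1.
rewrite sum1_card cardC1 card_ord -(leq_add2l (pulls A K.+1 b w)) sumE.
by have := ltn_ord b; lia.
Qed.

Lemma pulls_gt0 t b w : (K < t)%N -> (0 < pulls A t b w)%N.
Proof.
elim: t => // t IH; rewrite ltnS leq_eqVlt => /orP[/eqP <-|Kt].
  by rewrite pulls_init.
rewrite pullsS; last exact: leq_ltn_trans (leq0n K) Kt.
exact: leq_trans (IH Kt) (leq_addr _ _).
Qed.

End Pulls.

Lemma ln_inv_ge0 (R : realType) (delta : R) : 0 < delta -> delta <= 1 ->
  0 <= ln delta^-1.
Proof. by move=> d0 d1; apply: ln_ge0; rewrite invf_ge1. Qed.

Section Confidence.
Context (R : realType) (T : Type) (K n : nat) (mu : 'I_K -> R) (astar : 'I_K)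
  (A : nat -> T -> 'I_K) (Y : nat -> T -> R) (delta : R).
Hypothesis A_init : forall w (a : 'I_K), exists2 t, (1 <= t <= K)%N & A t w = a.
Hypothesis astar_opt : forall a, a != astar -> mu a < mu astar.
Hypothesis delta_gt0 : 0 < delta.
Hypothesis delta_le1 : delta <= 1.
Hypothesis A_alg : forall t w, (K < t <= n)%N -> alg_round A Y delta t w.

Let L := ln delta^-1.
Let L_ge0 : 0 <= L. Proof. exact: ln_inv_ge0. Qed.

Lemma conf_sqr t a w : conf A delta t a w ^+ 2 = 2 * L / (pulls A t a w)%:R.
Proof. by rewrite sqr_sqrtr // divr_ge0 // mulr_ge0. Qed.

Lemma gap_le_conf t w a :
  (forall b, `|muhat A Y t b w - mu b| <= conf A delta t b w) ->
  (K < t <= n)%N -> A t w = a -> mu astar - mu a <= 4 * conf A delta t a w.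
Proof.
move=> ci /[dup] Ktn /andP[Kt _] Ata.
have [lcb_le ucb_ge] : (forall b, lcb A Y delta t b w <= mu b) /\
                       (forall b, mu b <= ucb A Y delta t b w).
  by split=> b; have := ci b; rewrite /lcb /ucb ler_norml => /andP[]; lra.
have astar_plausible : plausible A Y delta t w astar.
  move=> b; apply: le_trans (lcb_le b) (le_trans _ (ucb_ge astar)).
  by have [->|/astar_opt/ltW] := eqVneq b astar.
have [a_plausible a_least] := A_alg w Ktn; rewrite Ata in a_plausible a_least.
have pulls_a_le : (pulls A t a w)%:R <= (pulls A t astar w)%:R :> R.
  by rewrite -lef_pV2 ?posrE ?ltr0n ?(pulls_gt0 A_init) // a_least.
have conf_le : conf A delta t astar w <= conf A delta t a w.
  by apply: ler_wsqrtr; apply: ler_wpM2l; rewrite ?mulr_ge0 // lef_pV2 ?posrE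
    ?ltr0n ?(pulls_gt0 A_init).
have := a_plausible astar; have := ci astar; have := ci a.
rewrite /lcb /ucb !ler_norml => /andP[? ?] /andP[? ?]; lra.
Qed.

Lemma gap_ge0 a : 0 <= mu astar - mu a.
Proof. by rewrite subr_ge0; have [->|/astar_opt/ltW] := eqVneq a astar. Qed.

Lemma gap_sqr_mul_pulls_le t w a :
  (forall b, `|muhat A Y t b w - mu b| <= conf A delta t b w) ->
  (K < t <= n)%N -> A t w = a ->
  (mu astar - mu a) ^+ 2 * (pulls A t a w)%:R <= 32 * L.
Proof.
move=> ci /[dup] Ktn /andP[Kt _] Ata.
have p_gt0 : 0 < (pulls A t a w)%:R :> R by rewrite ltr0n (pulls_gt0 A_init).
have gap_le := gap_le_conf ci Ktn Ata.
have gap0 := gap_ge0 a.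
have sqr_le : (mu astar - mu a) ^+ 2 <= 16 * conf A delta t a w ^+ 2 by nra.
apply: le_trans (ler_wpM2r (ltW p_gt0) sqr_le) _.
rewrite conf_sqr (_ : 16 * _ * _ = 32 * L) //.
by field; rewrite lt0r_neq0.
Qed.

Definition confident w := forall b t, (K < t <= n)%N ->
  `|muhat A Y t b w - mu b| <= conf A delta t b w.

Lemma pulls_le_confident w a : confident w -> a != astar ->
  forall t, (K < t <= n.+1)%N ->
  (pulls A t a w)%:R <= 1 + 32 * L / (mu astar - mu a) ^+ 2.
Proof.
move=> ci a_neq; have gap_sqr_gt0 : 0 < (mu astar - mu a) ^+ 2.
  by rewrite exprn_gt0 // subr_gt0 astar_opt.
have bound_ge0 : 0 <= 32 * L / (mu astar - mu a) ^+ 2.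
  by apply: divr_ge0 (ltW gap_sqr_gt0); apply: mulr_ge0 L_ge0.
elim => // t IH /andP[Kt tn].
have [->|tK] := eqVneq t K; first by rewrite pulls_init // lerDl.
have {tK}Kt : (K < t)%N by rewrite ltn_neqAle eq_sym tK -ltnS.
rewrite pullsS; last exact: leq_ltn_trans (leq0n K) Kt.
case: eqP => [Ata|_]; last by rewrite addn0; apply: IH; rewrite Kt ltnW.
rewrite natrD.
have Ktn : (K < t <= n)%N by rewrite Kt -ltnS.
have := gap_sqr_mul_pulls_le (fun b => ci b t Ktn) Ktn Ata.
rewrite mulrC -ler_pdivlMr // /= => pulls_le; lra.
Qed.

Hypothesis K_le_n : (K <= n)%N.

Lemma regret_le_confident w (Dmin : R) : confident w -> 0 < Dmin ->
  (forall a, a != astar -> Dmin <= mu astar - mu a) ->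
  \sum_(1 <= t < n.+1) (mu astar - mu (A t w)) <=
  \sum_(b < K) (mu astar - mu b) + K%:R * (32 * L / Dmin).
Proof.
move=> ci Dmin_gt0 Dmin_le.
rewrite (sum_pullsE A (fun b => mu astar - mu b)).
have -> : K%:R * (32 * L / Dmin) = \sum_(b < K) 32 * L / Dmin.
  by rewrite sumr_const card_ord mulr_natl.
rewrite -big_split /=.
apply: ler_sum => b _.
have [->|b_neq] := eqVneq b astar.
  rewrite subrr mul0r add0r; apply: divr_ge0 (ltW Dmin_gt0).
  exact: mulr_ge0 L_ge0.
have gap_gt0 : 0 < mu astar - mu b by rewrite subr_gt0 astar_opt.
have Kn : (K < n.+1 <= n.+1)%N by rewrite leqnn ltnS K_le_n.
apply: le_trans (ler_wpM2l (ltW gap_gt0) (pulls_le_confident ci b_neq Kn)) _.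
rewrite mulrDr mulr1 lerD2l.
rewrite (_ : _ * (_ / _) = 32 * L / (mu astar - mu b)); last first.
  by field; rewrite lt0r_neq0.
by apply: ler_wpM2l; rewrite ?mulr_ge0 ?L_ge0 // lef_pV2 ?posrE ?Dmin_le.
Qed.

End Confidence.

Definition tilt (R : realType) (delta : R) (m : nat) (s : bool) : R :=
  (if s then 1 else -1) * Num.sqrt (2 * ln delta^-1 / m%:R).

Section Deviation.
Context (R : realType) (d : measure_display) (T : measurableType d) (K : nat)
  (mu : 'I_K -> R) (A : nat -> T -> 'I_K) (Y eta : nat -> T -> R) (delta : R).
Hypothesis Y_def : forall t w, Y t w = mu (A t w) + eta t w.
Hypothesis A_init : forall w (a : 'I_K), exists2 t, (1 <= t <= K)%N & A t w = a.
Hypothesis delta_gt0 : 0 < delta.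
Hypothesis delta_le1 : delta <= 1.

Lemma muhat_subE t b w : (0 < pulls A t b w)%N ->
  muhat A Y t b w - mu b =
  (\sum_(1 <= s < t) (A s w == b)%:R * eta s w) / (pulls A t b w)%:R.
Proof.
move=> p_gt0.
have sumYE : \sum_(1 <= s < t | A s w == b) Y s w =
    (pulls A t b w)%:R * mu b + \sum_(1 <= s < t) (A s w == b)%:R * eta s w.
  rewrite /pulls natr_sum big_distrl /= -big_split /= big_mkcond /=.
  apply: eq_bigr => s _; case: eqP => [<-|_] /=; first by rewrite Y_def !mul1r.
  by rewrite !mul0r addr0.
by rewrite /muhat sumYE; field; rewrite pnatr_eq0 -lt0n.
Qed.

Lemma exp_supermartE b l t w :
  exp_supermart A eta b l t w =
  expR (l * \sum_(1 <= s < t) (A s w == b)%:R * eta s w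
        - l ^+ 2 / 2 * (pulls A t b w)%:R).
Proof.
rewrite /exp_supermart /pulls natr_sum !big_distrr /= -sumrB; congr expR.
by apply: eq_bigr => s _; ring.
Qed.

Lemma exp_supermart_ge_unconfident b t w : (K < t)%N ->
  conf A delta t b w < `|muhat A Y t b w - mu b| ->
  exists s, 1 <= delta * exp_supermart A eta b (tilt delta (pulls A t b w) s) t w.
Proof.
move=> Kt.
have p_gt0 : (0 < pulls A t b w)%N by exact: (pulls_gt0 A_init).
rewrite muhat_subE //.
set p := pulls A t b w in p_gt0 *; set S := \sum_(1 <= s < t) _.
set c := conf A delta t b w; set L := ln delta^-1 => c_lt.
have pR : 0 < p%:R :> R by rewrite ltr0n.
have L_ge0 : 0 <= L by exact: ln_inv_ge0.
have c_ge0 : 0 <= c by exact: sqrtr_ge0.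
have c_sqr : c ^+ 2 = 2 * L / p%:R by rewrite sqr_sqrtr // divr_ge0 // mulr_ge0.
have cp_le : c * p%:R <= `|S|.
  by move: c_lt; rewrite normrM normfV (gtr0_norm pR) ltr_pdivlMr // => /ltW.
exists (0 <= S).
have tiltS : tilt delta p (0 <= S) * S = c * `|S|.
  rewrite /tilt -/c; case: (lerP 0 S) => S0; first by rewrite ger0_norm // mul1r.
  by rewrite ltr0_norm // mulN1r mulrN mulNr.
have tilt_sqr : tilt delta p (0 <= S) ^+ 2 = c ^+ 2.
  by rewrite /tilt -/c; case: (0 <= S); rewrite ?mul1r ?mulN1r ?sqrrN.
rewrite exp_supermartE -/S -/p tiltS tilt_sqr c_sqr.
rewrite (_ : 2 * L / p%:R / 2 * p%:R = L); last by field; rewrite lt0r_neq0.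
have : L <= c * `|S| - L.
  have : c * (c * p%:R) <= c * `|S| by rewrite ler_wpM2l.
  rewrite mulrA -expr2 c_sqr divfK ?lt0r_neq0 //; lra.
rewrite -ler_expR lnK ?posrE ?invr_gt0 // => exp_ge.
by rewrite -(mulfV (lt0r_neq0 delta_gt0)) ler_wpM2l // ltW.
Qed.

End Deviation.

Section Regret.
Context (R : realType) (d : measure_display) (T : measurableType d)
  (P : probability T R) (K n : nat) (mu : 'I_K -> R) (astar : 'I_K)
  (A : nat -> T -> 'I_K) (Y eta : nat -> T -> R) (delta Dmin : R).
Hypothesis K_le_n : (K <= n)%N.
Hypothesis mu01 : forall a, 0 <= mu a <= 1.
Hypothesis astar_opt : forall a, a != astar -> mu a < mu astar.
Hypothesis Dmin_gt0 : 0 < Dmin.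
Hypothesis Dmin_le : forall a, a != astar -> Dmin <= mu astar - mu a.
Hypothesis measurable_A : forall t (a : 'I_K), measurable (A t @^-1` [set a]).
Hypothesis measurable_eta : forall t, measurable_fun setT (eta t).
Hypothesis Y_def : forall t w, Y t w = mu (A t w) + eta t w.
Hypothesis eta_subgaussian : forall t, (1 <= t <= n)%N ->
  forall B, history A Y t B -> forall lam : R,
    (\int[P]_(w in B) (expR (lam * eta t w))%:E
       <= (expR (lam ^+ 2 / 2))%:E * P B)%E.
Hypothesis A_init : forall w (a : 'I_K), exists2 t, (1 <= t <= K)%N & A t w = a.
Hypothesis delta_gt0 : 0 < delta.
Hypothesis delta_le1 : delta <= 1.
Hypothesis A_alg : forall t w, (K < t <= n)%N -> alg_round A Y delta t w.

Definition regret w := \sum_(1 <= t < n.+1) (mu astar - mu (A t w)).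

Lemma regret_le_n w : regret w <= n%:R.
Proof.
apply: (@le_trans _ _ (\sum_(1 <= t < n.+1) (1 : R))); last first.
  by rewrite sumr_const_nat subn1.
apply: ler_sum => t _.
by have := mu01 (A t w); have := mu01 astar => /andP[? ?] /andP[? ?]; lra.
Qed.

Lemma regret_ge0 w : 0 <= regret w.
Proof. by apply: sumr_ge0 => t _; exact: gap_ge0 astar_opt _. Qed.

Lemma measurable_regret : measurable_fun setT regret.
Proof.
apply: measurable_sum => t.
exact: (measurable_fun_ord_comp (fun b => mu astar - mu b) (measurable_A t)).
Qed.

Let confident_bound : R :=
  \sum_(b < K) (mu astar - mu b) + K%:R * (32 * ln delta^-1 / Dmin).

Let confident_bound_ge0 : 0 <= confident_bound.
Proof.
apply: addr_ge0; first by apply: sumr_ge0 => a _; exact: gap_ge0 astar_opt a.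
apply: mulr_ge0 => //; apply: divr_ge0 (ltW Dmin_gt0).
exact: mulr_ge0 (ln_inv_ge0 delta_gt0 delta_le1).
Qed.

Let index := ('I_K * 'I_n.+1 * 'I_n.+1 * bool)%type.

(* Indexing by the pull count as well makes each tilt deterministic. *)
Let deviation (i : index) (w : T) : R :=
  let: (b, t, m, s) := i in delta * exp_supermart A eta b (tilt delta m s) t w.

Let deviation_ge0 i w : 0 <= deviation i w.
Proof. by case: i => [[[b t] m] s]; rewrite mulr_ge0 ?exp_supermart_ge0 ?ltW. Qed.

Let measurable_deviation i : measurable_fun setT (deviation i).
Proof.
case: i => [[[b t] m] s]; apply: measurable_funM; first exact: measurable_cst.
exact: (measurable_exp_supermart measurable_A measurable_eta Y_def).
Qed.

Lemma regret_le_deviation w :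
  regret w <= confident_bound + n%:R * \sum_(i : index) deviation i w.
Proof.
have dev_ge0 : 0 <= \sum_(i : index) deviation i w.
  by apply: sumr_ge0 => i _; exact: deviation_ge0.
have [ci|] := pselect (confident n mu A Y delta w).
  apply: le_trans (regret_le_confident A_init astar_opt delta_gt0 delta_le1
    A_alg K_le_n ci Dmin_gt0 Dmin_le) _.
  by rewrite lerDl mulr_ge0.
move=> /existsNP[b /existsNP[t /not_implyP[/andP[Kt tn] /negP]]].
rewrite -ltNge => unconfident.
have [s dev_ge1] := exp_supermart_ge_unconfident Y_def A_init delta_gt0
  delta_le1 Kt unconfident.
have tn1 : (t < n.+1)%N by rewrite ltnS.
have pn1 : (pulls A t b w < n.+1)%N.
  by apply: leq_ltn_trans (pulls_le A t b w) _; lia.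
have sum_dev_ge1 : 1 <= \sum_(i : index) deviation i w.
  rewrite (bigD1 (b, Ordinal tn1, Ordinal pn1, s)) //=.
  apply: le_trans dev_ge1 _; rewrite lerDl.
  by apply: sumr_ge0 => i _; exact: deviation_ge0.
apply: le_trans (regret_le_n w) _.
rewrite -[X in X <= _]add0r; apply: lerD; first exact: confident_bound_ge0.
by rewrite -[X in X <= _]mulr1; apply: ler_wpM2l.
Qed.

Let integral_deviation_le i : (\int[P]_w (deviation i w)%:E <= delta%:E)%E.
Proof.
case: i => [[[b t] m] s] /=; under eq_integral do rewrite EFinM.
have mM : measurable_fun setT
    (fun w => (exp_supermart A eta b (tilt delta m s) t w)%:E).
  apply/measurable_EFinP.
  exact: (measurable_exp_supermart measurable_A measurable_eta Y_def).
have M_ge0 w : setT w -> (0 <= (exp_supermart A eta b (tilt delta m s) t w)%:E)%E.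
  by rewrite lee_fin exp_supermart_ge0.
have delta_ge0 : (0 <= delta%:E)%E by rewrite lee_fin ltW.
rewrite (ge0_integralZl P measurableT mM M_ge0 delta_ge0).
rewrite -[X in (_ <= X)%E]mule1; apply: lee_wpmul2l => //.
apply: (integral_exp_supermart_le1 measurable_A measurable_eta Y_def
  eta_subgaussian).
exact: ltnW (ltn_ord t).
Qed.

Lemma expected_regret_le : (\int[P]_w (regret w)%:E <=
  (confident_bound + n%:R * (delta *+ (K * n.+1 * n.+1 * 2)))%:E)%E.
Proof.
have mdevE i : measurable_fun setT (fun w => (deviation i w)%:E).
  exact/measurable_EFinP.
have devE_ge0 i w : setT w -> (0 <= (deviation i w)%:E)%E.
  by rewrite lee_fin deviation_ge0.
have regretE_ge0 w : setT w -> (0 <= (regret w)%:E)%E.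
  by rewrite lee_fin regret_ge0.
have mregretE : measurable_fun setT (fun w => (regret w)%:E).
  exact/measurable_EFinP/measurable_regret.
have mboundE : measurable_fun setT
    (fun w => (confident_bound + n%:R * \sum_(i : index) deviation i w)%:E).
  apply/measurable_EFinP/measurable_funD; first exact: measurable_cst.
  by apply: measurable_funM; [exact: measurable_cst | exact: measurable_sum].
apply: le_trans (ge0_le_integral P measurableT regretE_ge0 mregretE mboundE
  (fun w _ => regret_le_deviation w)) _.
under eq_integral do rewrite EFinD EFinM -sumEFin.
have msum : measurable_fun setT (fun w => \sum_(i : index) (deviation i w)%:E)%E.
  by apply: emeasurable_sum => i; exact: mdevE.
have sum_ge0 w : setT w -> (0 <= \sum_(i : index) (deviation i w)%:E)%E.
  by move=> _; rewrite sume_ge0 // => i _; exact: devE_ge0.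
have nsum_ge0 w : setT w ->
    (0 <= (n%:R)%:E * \sum_(i : index) (deviation i w)%:E)%E.
  by move=> _; rewrite mule_ge0 ?lee_fin ?sum_ge0.
have mnsum : measurable_fun setT
    (fun w => (n%:R)%:E * \sum_(i : index) (deviation i w)%:E)%E.
  by apply: emeasurable_funM => //; exact: measurable_cst.
have cbE_ge0 (w : T) : setT w -> (0 <= confident_bound%:E)%E.
  by move=> _; rewrite lee_fin confident_bound_ge0.
rewrite (ge0_integralD P measurableT cbE_ge0 (measurable_cst _) nsum_ge0 mnsum).
rewrite integral_cst // [X in (_ * X)%E](_ : _ = 1%E); last first.
  exact: probability_setT.
rewrite mule1 (ge0_integralZl P measurableT msum sum_ge0) ?lee_fin //.
rewrite ge0_integral_sum // [X in (_ <= X)%E]EFinD [(n%:R * _)%:E]EFinM.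
apply: leeD2l.
apply: lee_wpmul2l; first by rewrite lee_fin.
apply: (@le_trans _ _ (\sum_(i : index) delta%:E)%E).
  by apply: lee_sum => i _; exact: integral_deviation_le.
by rewrite sumEFin sumr_const !card_prod !card_ord card_bool.
Qed.

End Regret.

Lemma half_le_ln_nat (R : realType) (n : nat) :
  (2 <= n)%N -> 1 / 2 <= ln n%:R :> R.
Proof.
move=> n_ge2; apply: le_trans (_ : ln 2 <= _); last first.
  by rewrite ler_ln ?posrE ?ler_nat // ltr0n; lia.
have := @le_ln1Dx R (- 2^-1); rewrite (_ : 1 + - 2^-1 = 2^-1); last by field.
rewrite lnV ?posrE // => /(_ _); rewrite ltrN2 invf_lt1 ?ltr1n // => /(_ isT).
lra.
Qed.

Lemma cubic_failure_mass_le (R : realType) (K n : nat) : (1 <= n)%N ->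
  n%:R * ((n%:R ^+ 3)^-1 *+ (K * n.+1 * n.+1 * 2)) <= 8 * K%:R :> R.
Proof.
move=> n_ge1; have n_gt0 : 0 < n%:R :> R by rewrite ltr0n.
have n_ge1' : 1 <= n%:R :> R by rewrite ler1n.
rewrite -[_ *+ (K * _ * _ * _)]mulr_natr !natrM -natr1.
rewrite (_ : _ * _ = 2 * K%:R * (n%:R + 1) ^+ 2 / n%:R ^+ 2); last first.
  by field; rewrite lt0r_neq0.
rewrite ler_pdivrMr ?exprn_gt0 //.
have : (n%:R + 1) ^+ 2 <= 4 * n%:R ^+ 2 :> R by nra.
have : 0 <= K%:R :> R by [].
nra.
Qed.

Theorem theorem1 (R : realType) :
  exists C : R, 0 < C /\
  forall (d : measure_display) (T : measurableType d) (P : probability T R)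
    (K n : nat) (mu : 'I_K -> R) (astar : 'I_K) (Dmin : R)
    (A : nat -> T -> 'I_K) (Y eta : nat -> T -> R),
    (2 <= K)%N -> (K <= n)%N ->
    (forall a, 0 <= mu a <= 1) ->
    (* unique optimal action *)
    (forall a, a != astar -> mu a < mu astar) ->
    (* Dmin = min_{a <> astar} Delta(a) *)
    (exists2 a, a != astar & Dmin = mu astar - mu a) ->
    (forall a, a != astar -> Dmin <= mu astar - mu a) ->
    (* measurability of actions and noise *)
    (forall t (a : 'I_K), measurable (A t @^-1` [set a])) ->
    (forall t, measurable_fun setT (eta t)) ->
    (* reward model *)
    (forall t w, Y t w = mu (A t w) + eta t w) ->
    (* noise: conditionally on the history (previous actions and rewards and
       the current action), eta_t is mean zero and 1-sub-Gaussian *)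
    (forall t, (1 <= t <= n)%N ->
       P.-integrable setT (EFin \o eta t) /\
       forall B, history A Y t B ->
         (\int[P]_(w in B) (eta t w)%:E = 0)%E /\
         forall lam : R,
           (\int[P]_(w in B) (expR (lam * eta t w))%:E
              <= (expR (lam ^+ 2 / 2))%:E * P B)%E) ->
    (* rounds 1..K: each action is taken once *)
    (forall w (a : 'I_K), exists2 t, (1 <= t <= K)%N & A t w = a) ->
    (* rounds K+1..n: the algorithm with delta = 1/n^3 *)
    (forall t w, (K < t <= n)%N -> alg_round A Y (n%:R ^+ 3)^-1 t w) ->
    (\int[P]_w (\sum_(1 <= t < n.+1) (mu astar - mu (A t w)))%:E
       <= (C * (\sum_(a : 'I_K) (mu astar - mu a)
                + K%:R * ln (n%:R) / Dmin))%:E)%E.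
Proof.
exists 112; split => // d T P K n mu astar Dmin A Y eta K_ge2 K_le_n mu01
  astar_opt [a a_neq Dmin_def] Dmin_le measurable_A measurable_eta Y_def noise
  A_init A_alg.
have n_ge2 : (2 <= n)%N := leq_trans K_ge2 K_le_n.
have n_ge1 : 1 <= n%:R :> R by rewrite ler1n; exact: ltnW.
have n_gt0 : 0 < n%:R :> R by rewrite ltr0n; lia.
have delta_gt0 : 0 < (n%:R ^+ 3)^-1 :> R by rewrite invr_gt0 exprn_gt0.
have delta_le1 : (n%:R ^+ 3)^-1 <= 1 :> R.
  by rewrite invf_le1 ?exprn_ege1 ?exprn_gt0.
have Dmin_gt0 : 0 < Dmin by rewrite Dmin_def subr_gt0 astar_opt.
have Dmin_le1 : Dmin <= 1.
  rewrite Dmin_def; have := mu01 a; have := mu01 astar.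
  by move=> /andP[? ?] /andP[? ?]; lra.
have subgaussian t ht B HB lam := ((noise t ht).2 B HB).2 lam.
apply: le_trans (expected_regret_le K_le_n mu01 astar_opt Dmin_gt0 Dmin_le
  measurable_A measurable_eta Y_def subgaussian A_init delta_gt0 delta_le1
  A_alg) _.
rewrite lee_fin invrK lnXn //.
have gaps_ge0 : 0 <= \sum_(b < K) (mu astar - mu b).
  by apply: sumr_ge0 => b _; exact: gap_ge0 astar_opt b.
have mass_le := cubic_failure_mass_le R K (ltnW n_ge2).
have L_ge_half := half_le_ln_nat R n_ge2.
set L := ln n%:R in L_ge_half *.
have KL_ge0 : 0 <= K%:R * L by rewrite mulr_ge0 //; lra.
have KL_le : K%:R * L <= K%:R * L / Dmin by rewrite ler_pdivlMr //; nra.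
have K_le : K%:R / 2 <= K%:R * L :> R by nra.
lra.
Qed.
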